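(* For any simple connected graph $G$ with at least one edge, $src(G)\geq \chi'(G)\geq \omega'(G)$. Moreover, if an edge coloring $f$ of $G$ strongly rainbow connects $G$, then $f$ is a proper coloring of the vertices of the auxiliary graph $H(G)$.
   Context: An edge coloring of $G$ is any function $f:E(G)\to\{1,\dots,k\}$, $k\in\mathbb{N}$ (adjacent edges may share a color). A path is rainbow with respect to $f$ if its edges receive pairwise distinct colors. $f$ strongly rainbow connects $G$ if for every pair of distinct vertices $u,v$ there is a shortest $(u,v)$-path that is rainbow; $src(G)$ is the minimum $k$ for which such an $f:E(G)\to\{1,\dots,k\}$ exists. For distinct $u_1,u_2\in V(G)$, an edge $e$ separates $u_1,u_2$ if $e$ lies on every shortest $(u_1,u_2)$-path in $G$. The auxiliary graph $H(G)$ has vertex set $E(G)$, and two distinct edges $e_1,e_2\in E(G)$ are adjacent in $H(G)$ iff there exists a pair of distinct vertices $v_1,v_2\in V(G)$ separated by both $e_1$ and $e_2$. Define $\omega'(G)=\omega(H(G))$ (clique number) and $\chi'(G)=\chi(H(G))$ (chromatic number). Since $V(H(G))=E(G)$, an edge coloring of $G$ is a coloring of the vertices of $H(G)$. *)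

From HB Require Import structures.
From mathcomp Require Import all_boot.
From Stdlib Require Import ClassicalEpsilon.

Set Implicit Arguments.
Unset Strict Implicit.
Unset Printing Implicit Defensive.

Definition classic_bool (P : Prop) : bool :=
  if excluded_middle_informative P then true else false.

Lemma classic_boolP (P : Prop) : reflect P (classic_bool P).
Proof. rewrite /classic_bool; case: excluded_middle_informative => h; constructor => //. Qed.

Lemma classic_bool_ex (P : nat -> Prop) :
  (exists n, P n) -> exists n, classic_bool (P n).
Proof. by case=> n Pn; exists n; apply/classic_boolP. Qed.

(* The least natural number satisfying P (0 if there is none). *)
Definition nat_min (P : nat -> Prop) : nat :=
  match excluded_middle_informative (exists n, P n) with
  | left h => ex_minn (classic_bool_ex h)
  | right _ => 0
  end.

Definition is_clique (V : finType) (adj : V -> V -> Prop) (S : {set V}) : Prop :=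
  forall x y, x \in S -> y \in S -> x != y -> adj x y.

Definition clique_number (V : finType) (adj : V -> V -> Prop) : nat :=
  \max_(S : {set V} | classic_bool (is_clique adj S)) #|S|.

Definition proper_coloring (V : finType) (adj : V -> V -> Prop) (C : Type)
  (c : V -> C) : Prop :=
  forall x y, adj x y -> c x <> c y.

Definition chromatic_number (V : finType) (adj : V -> V -> Prop) : nat :=
  nat_min (fun k => exists c : V -> 'I_k, proper_coloring adj c).

Section Graph.
Variables (T : finType) (g : rel T).

Definition edge_set : {set {set T}} :=
  [set A | [exists x, exists y, g x y && (A == [set x; y])]].

Definition edgeT : finType := {A : {set T} | A \in edge_set}.


(* a walk from u is a sequence p with u :: p an g-path; it ends at last u p;
   its length is size p *)
Definition walk (u v : T) (p : seq T) : Prop := path g u p /\ last u p = v.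

Definition shortest (u v : T) (p : seq T) : Prop :=
  walk u v p /\ forall q, walk u v q -> size p <= size q.

Definition walk_edges (u : T) (p : seq T) : seq {set T} :=
  [seq [set xy.1; xy.2] | xy <- zip (u :: p) p].

Definition on_walk (e : edgeT) (u : T) (p : seq T) : Prop :=
  val e \in walk_edges u p.

(* color of a vertex set under an edge coloring (None if not an edge) *)
Definition colorS k (f : edgeT -> 'I_k) (A : {set T}) : option 'I_k :=
  omap f (insub A : option edgeT).

Definition rainbow k (f : edgeT -> 'I_k) (u : T) (p : seq T) : Prop :=
  uniq [seq colorS f A | A <- walk_edges u p].

Definition strongly_rainbow k (f : edgeT -> 'I_k) : Prop :=
  forall u v, u != v -> exists p, shortest u v p /\ rainbow f u p.

Definition src : nat :=
  nat_min (fun k => exists f : edgeT -> 'I_k, strongly_rainbow f).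

Definition separates (e : edgeT) (u1 u2 : T) : Prop :=
  forall p, shortest u1 u2 p -> on_walk e u1 p.

Definition H_adj (e1 e2 : edgeT) : Prop :=
  e1 != e2 /\ exists v1 v2, v1 != v2 /\ separates e1 v1 v2 /\ separates e2 v1 v2.

Definition omega' : nat := clique_number H_adj.
Definition chi' : nat := chromatic_number H_adj.

End Graph.

(* If f strongly rainbow connects G and the edges e1, e2 both separate v1, v2,
   then both lie on the rainbow shortest (v1,v2)-path chosen for f, so
   f e1 <> f e2: f properly colours H(G), whence chi' <= src.  The parameter
   src is finite because giving all edges distinct colours strongly rainbow
   connects a connected graph: shortest paths can be taken simple, and a
   simple path traverses distinct edges.  Finally omega' <= chi' since a
   proper colouring is injective on every clique. *)

From mathcomp Require Import all_boot.
From Stdlib Require Import ClassicalEpsilon.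

Set Implicit Arguments.
Unset Strict Implicit.
Unset Printing Implicit Defensive.

Lemma nat_minP (P : nat -> Prop) : (exists n, P n) -> P (nat_min P).
Proof.
move=> exP; rewrite /nat_min; case: excluded_middle_informative => // exP'.
by case: ex_minnP => m /classic_boolP.
Qed.

Lemma nat_min_le (P : nat -> Prop) n : P n -> nat_min P <= n.
Proof.
move=> Pn; rewrite /nat_min; case: excluded_middle_informative => // exP.
by case: ex_minnP => m _; apply; apply/classic_boolP.
Qed.

Lemma uniq_map_inj_in (A B : eqType) (f : A -> B) (s : seq A) :
  uniq (map f s) -> {in s &, injective f}.
Proof.
elim: s => //= a s IH /andP[fa_notin uniq_fs] x y.
rewrite !inE => /predU1P[->|xs] /predU1P[->|ys] // fxy.
- by case/negP: fa_notin; rewrite fxy map_f.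
- by case/negP: fa_notin; rewrite -fxy map_f.
- exact: IH.
Qed.

Section Colourings.
Variables (V : finType) (adj : V -> V -> Prop).

Lemma proper_coloring_clique_card k (c : V -> 'I_k) (S : {set V}) :
  proper_coloring adj c -> is_clique adj S -> #|S| <= k.
Proof.
move=> proper_c clique_S; rewrite -(card_in_imset (f := c)).
  by apply: leq_trans (max_card _) _; rewrite card_ord.
move=> x y xS yS cxy; apply/eqP/negP => /negP xy.
exact: proper_c _ _ (clique_S x y xS yS xy) cxy.
Qed.

Lemma clique_number_le_chromatic_number :
  (forall x y, adj x y -> x != y) -> clique_number adj <= chromatic_number adj.
Proof.
move=> adj_neq.
have [c proper_c] : exists c : V -> 'I_(chromatic_number adj),
    proper_coloring adj c.
  apply: (@nat_minP (fun k => exists c : V -> 'I_k, proper_coloring adj c)).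
  exists #|V|, enum_rank => x y /adj_neq xy.
  by move/enum_rank_inj=> exy; rewrite exy eqxx in xy.
apply/bigmax_leqP => S /classic_boolP clique_S.
exact: proper_coloring_clique_card proper_c clique_S.
Qed.

End Colourings.

Section Graph.
Variables (T : finType) (g : rel T).

Lemma shortest_exists u v : connect g u v -> exists p, shortest g u v p.
Proof.
move=> /connectP[p0 p0_path ->].
pose P n := exists p, walk g u (last u p0) p /\ size p = n.
have [p [walk_p size_p]] : P (nat_min P) by apply: nat_minP; exists (size p0), p0.
by exists p; split=> // q walk_q; rewrite size_p; apply: nat_min_le; exists q.
Qed.

Lemma shortest_shorten u v p : shortest g u v p ->
  shortest g u v (shorten u p) /\ uniq (u :: shorten u p).
Proof.
case=> -[p_path <-]; case: (shortenP p_path) => q q_path uniq_q sub_qp min_p.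
split=> //; split=> // r walk_r; apply: leq_trans (min_p r walk_r).
by apply: uniq_leq_size sub_qp; case/andP: uniq_q.
Qed.

Lemma mem_walk_edges (u : T) p A z : A \in walk_edges u p -> z \in A -> z \in u :: p.
Proof.
elim: p u => [|y p IH] u //=; rewrite inE => /predU1P[-> | /IH Az] zA.
  by move: zA; rewrite !inE => /orP[] ->; rewrite ?orbT.
by rewrite inE Az ?orbT.
Qed.

Lemma walk_edges_uniq (u : T) p : uniq (u :: p) -> uniq (walk_edges u p).
Proof.
elim: p u => [|y p IH] u //= /andP[u_notin uniq_yp].
rewrite IH // andbT; apply/negP => /mem_walk_edges/(_ (set21 u y)).
exact/negP.
Qed.

Lemma walk_edges_edge u p A : path g u p -> A \in walk_edges u p -> A \in edge_set g.
Proof.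
elim: p u => [|y p IH] u //= /andP[guy y_path].
rewrite inE => /predU1P[-> | /(IH _ y_path)] //.
by rewrite inE; apply/existsP; exists u; apply/existsP; exists y; rewrite guy eqxx.
Qed.

Lemma colorS_val k (f : edgeT g -> 'I_k) (e : edgeT g) : colorS f (val e) = Some (f e).
Proof. by rewrite /colorS valK. Qed.

Lemma strongly_rainbow_proper k (f : edgeT g -> 'I_k) :
  strongly_rainbow f -> proper_coloring (@H_adj T g) f.
Proof.
move=> rainbow_f e1 e2 [e12 [v1 [v2 [v12 [sep1 sep2]]]]] fe12.
have [p [shortest_p rainbow_p]] := rainbow_f v1 v2 v12.
have /val_inj e1e2 : val e1 = val e2.
  apply: (uniq_map_inj_in rainbow_p (sep1 p shortest_p) (sep2 p shortest_p)).
  by rewrite !colorS_val fe12.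
by rewrite e1e2 eqxx in e12.
Qed.

Lemma injective_strongly_rainbow k (f : edgeT g -> 'I_k) :
  (forall x y : T, connect g x y) -> injective f -> strongly_rainbow f.
Proof.
move=> connected f_inj u v _.
have [p shortest_p] := shortest_exists (connected u v).
have [shortest_q uniq_q] := shortest_shorten shortest_p.
exists (shorten u p); split=> //; rewrite /rainbow map_inj_in_uniq.
  exact: walk_edges_uniq.
have q_path := shortest_q.1.1.
move=> A B /(walk_edges_edge q_path) EA /(walk_edges_edge q_path) EB.
rewrite -[A]/(val (Sub A EA : edgeT g)) -[B]/(val (Sub B EB : edgeT g)).
by rewrite !colorS_val => -[/f_inj ->].
Qed.

End Graph.

Theorem theorem1 (T : finType) (g : rel T) :
  symmetric g -> irreflexive g ->
  (forall x y : T, connect g x y) ->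
  (exists x y : T, g x y) ->
  [/\ chi' g <= src g,
      omega' g <= chi' g &
      forall (k : nat) (f : edgeT g -> 'I_k),
        strongly_rainbow f -> proper_coloring (@H_adj T g) f].
Proof.
move=> _ _ connected _; split; last exact: strongly_rainbow_proper.
- have [f rainbow_f] : exists f : edgeT g -> 'I_(src g), strongly_rainbow f.
    apply: (@nat_minP (fun k => exists f : edgeT g -> 'I_k, strongly_rainbow f)).
    exists #|edgeT g|, enum_rank.
    exact: injective_strongly_rainbow connected (@enum_rank_inj _).
  by apply: nat_min_le; exists f; apply: strongly_rainbow_proper.
- by apply: clique_number_le_chromatic_number => e1 e2 [].
Qed.
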